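(* Let $A\subseteq\Theta$ be a Borel set with $\Theta_0^\delta\subseteq A$ for some $\delta>0$, and suppose $(\mathcal{H},L)$ has the strong uniform convergence property with respect to $\mathcal{D}$, with strong uniform convergence function $f$. Let $\alpha>0$. Suppose one of the following holds: (a) the risk minimizer $\theta_0\in\arg\min_\Theta R$ exists, an empirical risk minimizer $\widehat{\theta}_S\in\arg\min_\Theta\widehat{R}_S$ exists for every sample $S$, and $\varepsilon(m,\alpha):=\inf\{\varepsilon>0\mid m\ge f(\varepsilon/2,\alpha)\}$; (b) $\varepsilon(m,\alpha):=\inf\{\varepsilon>0\mid m\ge\inf_{0<\delta'<\varepsilon}f((\varepsilon-\delta')/2,\alpha)\}$. Then $$\liminf_{m\to\infty}\Pr_{S\sim\mathcal{D}^m}\big[\mathrm{pl}^{\mathrm{boot},S}_{\varepsilon(m,\alpha)}(A)\ge1-\alpha\big]\ge1-\alpha.$$ Moreover, $\Pr_{S\sim\mathcal{D}^m}[\mathrm{pl}^{\mathrm{boot},S}_{\varepsilon(m,\alpha)}(A)\ge1-\alpha]\ge1-\alpha$ holds for every $m$ with $\varepsilon(m,\alpha)\le\delta$ in case (a), and for every $m$ with $\varepsilon(m,\alpha)\le\delta/2$ in case (b).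
   Context: Setting: data are i.i.d. from a distribution $\mathcal{D}$ on $\mathcal{X}\times\mathcal{Y}$; $\mathcal{H}=\{x\mapsto h(x;\theta)\mid\theta\in\Theta\}$ with $\Theta$ a topological space, $L:\mathcal{Y}\times\mathcal{Y}\to\mathbb{R}$ a loss. For a distribution $\widetilde{\mathcal{D}}$ on $\mathcal{X}\times\mathcal{Y}$ write $R_{\widetilde{\mathcal{D}}}(\theta)=\mathbb{E}_{\widetilde{\mathcal{D}}}[L(h(X;\theta),Y)]$ and $R=R_{\mathcal{D}}$ (assumed finite); for a sample $S=((X_i,Y_i))_{i=1}^m$, $\widehat{R}_S(\theta)=\frac1m\sum_{i=1}^mL(h(X_i;\theta),Y_i)$. All events are assumed measurable. $\widehat{\Theta}_S^\varepsilon=\{\theta\mid\widehat{R}_S(\theta)\le\inf_\vartheta\widehat{R}_S(\vartheta)+\varepsilon\}$, $\Theta_0^\delta=\{\theta\mid R(\theta)\le\inf_\vartheta R(\vartheta)+\delta\}$. Strong uniform convergence property: there is $w:\mathbb{R}^+\times\mathbb{R}^+\to\mathbb{R}$ (a ''witness'') such that for all $\varepsilon,\alpha>0$ and integers $m\ge w(\varepsilon,\alpha)$: (1) $\Pr_{S\sim\mathcal{D}^m}[\sup_\theta|R(\theta)-\widehat{R}_S(\theta)|\le\varepsilon]\ge1-\alpha$, and (2) $\inf_{\widetilde{\mathcal{D}}\in\mathcal{B}_m}\Pr_{S'\sim\widetilde{\mathcal{D}}^m}[\sup_\theta|R_{\widetilde{\mathcal{D}}}(\theta)-\widehat{R}_{S'}(\theta)|\le\varepsilon]\ge1-\alpha$,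 where $\mathcal{B}_m$ is the set of bootstrap resampling distributions, i.e. the empirical (uniform) distributions $\mathrm{Unif}(S)$ on the points of $S$ for every possible realization $S$ of $\mathcal{D}^m$. The strong uniform convergence function is $f(\varepsilon,\alpha)=\inf_w\lceil w(\varepsilon,\alpha)\rceil$ over all such witnesses. Bootstrapped plausibility: for an observed sample $S$ of size $m$, $\mathrm{pl}^{\mathrm{boot},S}_\varepsilon(A)=\Pr_{S'\sim\mathrm{Unif}(S)^m}[\widehat{\Theta}_{S'}^\varepsilon\cap A\ne\varnothing\mid\widehat{\Theta}_{S'}^\varepsilon\ne\varnothing]$ (the almost-sure limit of $\frac1B\sum_{i=1}^BI(\widehat{\Theta}_{S_i}^\varepsilon\cap A\neq\varnothing)$ over independent resamples $S_i$ with nonempty $\widehat{\Theta}_{S_i}^\varepsilon$), assumed well defined. *)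

From HB Require Import structures.
From mathcomp Require Import all_boot all_order all_algebra.
From mathcomp Require Import all_classical all_reals all_analysis.
Set Implicit Arguments.
Unset Strict Implicit.
Unset Printing Implicit Defensive.
Import Order.TTheory GRing.Theory Num.Theory.
Local Open Scope classical_set_scope.
Local Open Scope ring_scope.

Definition borel_set (T : topologicalType) (A : set T) : Prop := <<s open >> A.

(* Independence: product rule for every finite subfamily (the indices
   < n, other sets may be taken to be setT). *)
Definition iid_seq (R : realType) (dO dT : measure_display)
  (Omega : measurableType dO) (T : measurableType dT)
  (P : probability Omega R) (D : probability T R) (Z : nat -> Omega -> T) :=
  [/\ (forall i, measurable_fun setT (Z i)),
      (forall i (B : set T), measurable B -> P (Z i @^-1` B) = D B) &
      (forall n (B : nat -> set T), (forall i, measurable (B i)) ->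
         P (\bigcap_(i in `I_n) (Z i @^-1` B i)) =
         (\prod_(i < n) fine (P (Z i @^-1` B i)))%:E)].

Definition sample (Omega T : Type) (Z : nat -> Omega -> T) (m : nat)
  (w : Omega) : 'I_m -> T := fun i => Z (nat_of_ord i) w.
Arguments sample {Omega T} Z m w.

Definition resample (T : Type) (m : nat) (S : 'I_m -> T)
  (idx : {ffun 'I_m -> 'I_m}) : 'I_m -> T := fun i => S (idx i).

Section Risks.
Context (R : realType) (dX dY : measure_display)
  (X : measurableType dX) (Y : measurableType dY) (Theta : Type)
  (h : X -> Theta -> Y) (L : Y -> Y -> R).

Definition emp_risk (m : nat) (S : 'I_m -> X * Y) (th : Theta) : R :=
  m%:R^-1 * \sum_(i < m) L (h (S i).1 th) (S i).2.

Definition risk (D : probability (X * Y)%type R) (th : Theta) : \bar R :=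
  (\int[D]_z (L (h z.1 th) z.2)%:E)%E.

Definition erm_set (m : nat) (S : 'I_m -> X * Y) (eps : \bar R) : set Theta :=
  [set th | ((emp_risk S th)%:E <=
             ereal_inf (range (fun t => (emp_risk S t)%:E)) + eps)%E].

Definition risk_set (D : probability (X * Y)%type R) (delta : R) : set Theta :=
  [set th | (risk D th <= ereal_inf (range (risk D)) + delta%:E)%E].

(* Probability of an event under Unif(S)^m: resamples are the m^m index maps. *)
Definition boot_prob (m : nat) (Q : {ffun 'I_m -> 'I_m} -> Prop) : R :=
  #|[set idx : {ffun 'I_m -> 'I_m} | `[< Q idx >] ]|%:R
  / #|{ffun 'I_m -> 'I_m}|%:R.

(* bootstrapped plausibility pl^{boot,S}_eps(A): conditional probability under
   Unif(S)^m (ratio of counts) *)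
Definition pl_boot (m : nat) (S : 'I_m -> X * Y) (eps : \bar R) (A : set Theta) : R :=
  #|[set idx : {ffun 'I_m -> 'I_m} |
       `[< erm_set (resample S idx) eps `&` A !=set0 >] ]|%:R
  / #|[set idx : {ffun 'I_m -> 'I_m} |
       `[< erm_set (resample S idx) eps !=set0 >] ]|%:R.

Definition unif_dev (D : probability (X * Y)%type R) (m : nat)
  (S : 'I_m -> X * Y) (eps : R) : Prop :=
  (ereal_sup (range (fun th => `| risk D th - (emp_risk S th)%:E |)) <= eps%:E)%E.

(* same for the bootstrap distribution Unif(S): R_{Unif(S)} = \hat R_S *)
Definition boot_unif_dev (m : nat) (S S' : 'I_m -> X * Y) (eps : R) : Prop :=
  (ereal_sup (range (fun th => `| (emp_risk S th)%:E - (emp_risk S' th)%:E |))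
     <= eps%:E)%E.

Context (dO : measure_display) (Omega : measurableType dO)
  (P : probability Omega R) (D : probability (X * Y)%type R)
  (Z : nat -> Omega -> X * Y).

Definition suc_witness (w : R -> R -> R) : Prop :=
  forall eps alpha : R, 0 < eps -> 0 < alpha ->
  forall m : nat, (0 < m)%N -> w eps alpha <= m%:R ->
    (P [set om | unif_dev D (sample Z m om) eps] >= (1 - alpha)%:E)%E /\
    (forall S : 'I_m -> X * Y,
       boot_prob (fun idx => boot_unif_dev S (resample S idx) eps) >= 1 - alpha).

Definition strong_unif_conv : Prop := exists w, suc_witness w.

Definition suc_fun (eps alpha : R) : \bar R :=
  ereal_inf [set ((Num.ceil (w eps alpha))%:~R)%:E | w in suc_witness].

Definition eps_a (m : nat) (alpha : R) : \bar R :=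
  ereal_inf [set e%:E | e in [set e : R | 0 < e /\ (suc_fun (e / 2)%R alpha <= m%:R%:E)%E]].

Definition eps_b (m : nat) (alpha : R) : \bar R :=
  ereal_inf [set e%:E | e in [set e : R | 0 < e /\
    (ereal_inf [set suc_fun ((e - d) / 2)%R alpha | d in [set d : R | (0 < d < e)%R]]
       <= m%:R%:E)%E]].

Definition pl_event (m : nat) (eps : \bar R) (A : set Theta) (alpha : R) : set Omega :=
  [set om | pl_boot (sample Z m om) eps A >= 1 - alpha].

Definition pl_conclusion (eps : nat -> \bar R) (thr : R) (A : set Theta) (alpha : R) : Prop :=
  (limn_einf (fun m => P (pl_event m (eps m) A alpha)) >= (1 - alpha)%:E)%E /\
  (forall m : nat, (0 < m)%N -> (eps m <= thr%:E)%E ->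
     (P (pl_event m (eps m) A alpha) >= (1 - alpha)%:E)%E).

Definition pl_well_defined (eps : nat -> \bar R) (A : set Theta) (alpha : R) : Prop :=
  forall m : nat, (0 < m)%N ->
    (forall S : 'I_m -> X * Y, exists idx : {ffun 'I_m -> 'I_m},
       erm_set (resample S idx) (eps m) !=set0) /\
    measurable (pl_event m (eps m) A alpha).

End Risks.

From HB Require Import structures.
From mathcomp Require Import all_boot all_order all_algebra.
From mathcomp Require Import all_classical all_reals all_analysis.
From mathcomp Require Import lra zify.
Import Order.TTheory GRing.Theory Num.Theory.
Local Open Scope classical_set_scope.
Local Open Scope ring_scope.
Set Implicit Arguments.
Unset Strict Implicit.

(* Fix m and alpha and write r = eps(m, alpha).  By definition of eps, for
   every c > r/2 some witness of strong uniform convergence certifies level c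
   at sample size m.  Letting c decrease to r/2 (continuity of P from above,
   finiteness of the resampling space) yields two good events of probability
   at least 1 - alpha: sup |R - R_S| <= r/2 for the sample S, and
   sup |R_S - R_S'| <= r/2 for the resample S' of any S.  On them, every good
   resample S' has an r-approximate empirical minimiser in Theta_0^delta,
   hence in A: the ERM of S in case (a), an approximate minimiser in case (b)
   when r > 0.  The degenerate case r = 0 of (b) needs an anti-concentration
   count: if exact reproduction of the empirical risk had bootstrap
   probability >= 1 - alpha > 0 for all large samples, the loss could not
   depend on the data point, so all risks coincide.  Counting resamples then
   gives pl >= 1 - alpha on the good sample event.  Finally eps(m, alpha) is
   eventually below the threshold, which yields the liminf statement. *)

Section EmpiricalRisk.
Variables (R : realType) (dX dY : measure_display) (X : measurableType dX)
  (Y : measurableType dY) (Theta : Type) (h : X -> Theta -> Y) (L : Y -> Y -> R).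
Local Notation emp := (emp_risk h L).
Local Notation loss z th := (L (h z.1 th) z.2).

Lemma erm_setP m (S : 'I_m -> X * Y) r th :
  erm_set h L S r%:E th <-> forall th', emp S th - r <= emp S th'.
Proof.
rewrite /erm_set /= -leeBlDr //; split.
  move/ereal_infP => inf_ge th'; have := inf_ge _ (ex_intro2 _ _ th' I erefl).
  by rewrite -EFinB lee_fin.
by move=> le_all; apply/ereal_infP => _ [t _ <-]; rewrite -EFinB lee_fin.
Qed.

Lemma boot_unif_devP m (S S' : 'I_m -> X * Y) c :
  boot_unif_dev h L S S' c <-> forall th, `|emp S th - emp S' th| <= c.
Proof.
rewrite /boot_unif_dev; split.
  move/ereal_supP => sup_le th; have := sup_le _ (ex_intro2 _ _ th I erefl).
  by rewrite -EFinB abse_EFin lee_fin.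
by move=> dev_le; apply/ereal_supP => _ [t _ <-]; rewrite -EFinB abse_EFin lee_fin.
Qed.

Lemma boot_unif_dev_le m (S S' : 'I_m -> X * Y) c1 c2 :
  boot_unif_dev h L S S' c1 -> c1 <= c2 -> boot_unif_dev h L S S' c2.
Proof. by move=> dev_le c12; apply: (le_trans dev_le); rewrite lee_fin. Qed.

Lemma emp_risk_cst m (S : 'I_m -> X * Y) z th : (0 < m)%N ->
  (forall i, loss (S i) th = loss z th) -> emp S th = loss z th.
Proof.
move=> m0 loss_eq; rewrite /emp_risk (eq_bigr (fun _ => loss z th)) //.
rewrite sumr_const card_ord -[X in _ * X]mulr_natl mulrA mulVf ?mul1r //.
by rewrite pnatr_eq0 -lt0n.
Qed.

Section PopulationRisk.
Variable D : probability (X * Y)%type R.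
Local Notation Rk th := (fine (risk h L D th)).
Hypothesis risk_fin : forall th, risk h L D th \is a fin_num.

Lemma unif_devP m (S : 'I_m -> X * Y) c :
  unif_dev h L D S c <-> forall th, `|Rk th - emp S th| <= c.
Proof.
rewrite /unif_dev; split.
  move/ereal_supP => sup_le th; have := sup_le _ (ex_intro2 _ _ th I erefl).
  by rewrite -(fineK (risk_fin th)) -EFinB abse_EFin lee_fin fineK.
move=> dev_le; apply/ereal_supP => _ [t _ <-].
by rewrite -(fineK (risk_fin t)) -EFinB abse_EFin lee_fin.
Qed.

Lemma unif_dev_le m (S : 'I_m -> X * Y) c1 c2 :
  unif_dev h L D S c1 -> c1 <= c2 -> unif_dev h L D S c2.
Proof. by move=> dev_le c12; apply: (le_trans dev_le); rewrite lee_fin. Qed.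

Lemma mem_risk_set d th :
  (forall th', Rk th - d <= Rk th') -> risk_set h L D d th.
Proof.
move=> near_min; rewrite /risk_set /= -leeBlDr //; apply/ereal_infP => _ [t _ <-].
by rewrite -(fineK (risk_fin th)) -(fineK (risk_fin t)) -EFinB lee_fin.
Qed.

Lemma risk_cst z th : (forall z1 z2 th, loss z1 th = loss z2 th) ->
  risk h L D th = (loss z th)%:E.
Proof.
move=> loss_indep; rewrite /risk.
rewrite (_ : (fun z' => _) = cst (loss z th)%:E); last first.
  by apply: funext => z'; rewrite /= (loss_indep z' z).
by rewrite integral_cst // -[RHS]mule1; congr (_ * _)%E; exact: probability_setT.
Qed.

End PopulationRisk.

Lemma loss_bounded_below m r : (0 < m)%N ->
  (forall S : 'I_m -> X * Y, exists idx, erm_set h L (resample S idx) r%:E !=set0) ->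
  forall z, exists b, forall th, b <= loss z th.
Proof.
move=> m0 erm_ne z; have [idx [t /erm_setP t_erm]] := erm_ne (fun _ => z).
by exists (loss z t - r) => th; have := t_erm th; rewrite !(@emp_risk_cst m _ z).
Qed.

End EmpiricalRisk.

Lemma approx_argmin (R : realType) (T : Type) (f : T -> R) (b eta : R) (t0 : T) :
  (forall t, b <= f t) -> 0 < eta -> exists t, forall t', f t <= f t' + eta.
Proof.
move=> fb eta0; set i := ereal_inf (range (fun t => (f t)%:E)).
have i_le t : (i <= (f t)%:E)%E by apply: ge_ereal_inf; exists (f t)%:E => //; exists t.
have b_le : (b%:E <= i)%E by apply/ereal_infP => _ [t _ <-]; rewrite lee_fin.
have i_fin : i \is a fin_num.
  by rewrite fin_numE; apply/andP; split; apply/eqP => ei;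
    [move: b_le | have := i_le t0]; rewrite ei.
have : (i < (fine i + eta)%:E)%E by rewrite EFinD fineK // lteDl // lte_fin.
move=> /ereal_inf_lt [_ [t _ <-]]; rewrite lte_fin => ft_lt; exists t => t'.
have := i_le t'; rewrite -(fineK i_fin) lee_fin => ift'.
by rewrite ltW // (lt_le_trans ft_lt) // lerD2r.
Qed.

Section BootstrapProbability.
Variables (R : realType) (m : nat).
Local Notation resampling := {ffun 'I_m -> 'I_m}.

Lemma boot_prob_le (Q1 Q2 : resampling -> Prop) :
  (forall idx, Q1 idx -> Q2 idx) -> boot_prob R Q1 <= boot_prob R Q2.
Proof.
move=> Q12; rewrite /boot_prob; apply: ler_wpM2r; first by rewrite invr_ge0 ler0n.
rewrite ler_nat; apply: subset_leq_card; apply/fintype.subsetP => i.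
by rewrite !inE => /asboolP Q1i; apply/asboolP; apply: Q12.
Qed.

Lemma boot_prob_True : boot_prob R (fun _ : resampling => True) = 1.
Proof.
rewrite /boot_prob.
have -> : #|[set idx : resampling | `[< True >] ]| = #|{ffun 'I_m -> 'I_m}|.
  by apply: eq_card => f; apply/mem_set/asboolP.
by rewrite divff // pnatr_eq0 -lt0n; apply/card_gt0P; exists [ffun i => i].
Qed.

(* For a nondecreasing, right-continuous family of events, the bootstrap
   probability is right-continuous: since the resampling space is finite,
   the family is constant on some interval (c, c0]. *)
Lemma boot_prob_right_cont (Q : R -> resampling -> Prop) (c a : R) :
  (forall c1 c2 idx, c1 <= c2 -> Q c1 idx -> Q c2 idx) ->
  (forall idx, (forall c', c < c' -> Q c' idx) -> Q c idx) ->
  (forall c', c < c' -> a <= boot_prob R (Q c')) -> a <= boot_prob R (Q c).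
Proof.
move=> Qmono Qcont prob_ge.
pose G c' := [set idx : resampling | `[< Q c' idx >] ].
have G_sub c1 c2 : c1 <= c2 -> G c1 \subset G c2.
  by move=> c12; apply/fintype.subsetP => i; rewrite !inE => /asboolP Qc1i;
    apply/asboolP; apply: Qmono Qc1i.
have ex_card : exists k, `[< exists c', c < c' /\ #|G c'| = k >].
  by exists #|G (c + 1)|; apply/asboolP; exists (c + 1); rewrite ltrDl.
case: (ex_minnP ex_card) => k0 /asboolP [c0 [c_c0 card_c0]] k0_min.
have G_const c' : c < c' -> c' <= c0 -> G c' =i G c0.
  move=> cc' c'c0; apply/subset_cardP; last exact: G_sub.
  apply/eqP; rewrite eqn_leq subset_leq_card ?G_sub //= card_c0.
  by apply: k0_min; apply/asboolP; exists c'.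
apply: (le_trans (prob_ge _ c_c0)); apply: boot_prob_le => idx Qc0; apply: Qcont => c' cc'.
have : idx \in G (Num.min c0 c').
  by rewrite G_const ?ge_min ?lexx // ?lt_min ?c_c0 // inE; apply/asboolP.
by rewrite inE => /asboolP; apply: Qmono; rewrite ge_min lexx orbT.
Qed.

End BootstrapProbability.

Section BalancedResamplings.
Local Open Scope nat_scope.
Local Open Scope set_scope.

Lemma card_ord_lt n k : k <= n -> #|[pred x : 'I_n | x < k]| = k.
Proof.
move=> kn; rewrite -sum1_card.
transitivity (\sum_(i < k | true) 1); last by rewrite sum1_card card_ord.
rewrite (big_ord_widen_cond n (fun _ => true) (fun _ => 1) kn) /=.
by apply: eq_bigl => i; rewrite inE.
Qed.

Lemma foldr_muln_const (T : Type) (g : T -> nat) k (s : seq T) :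
  (forall x, g x = k) -> foldr muln 1 [seq g x | x <- s] = k ^ size s.
Proof. by move=> gk; elim: s => [|x s IH] //=; rewrite IH gk expnS. Qed.

Lemma card_ffun_lower_preimage k (T : {set 'I_(k + k)}) :
  #|[pred f : {ffun 'I_(k + k) -> 'I_(k + k)} | [set i | f i < k] == T]|
  = k ^ (k + k).
Proof.
have kn : k <= k + k by rewrite leq_addl.
pose p (f : {ffun 'I_(k + k) -> 'I_(k + k)}) := [set i | f i < k].
pose F i := if i \in T then [pred x : 'I_(k + k) | x < k]
            else [pred x : 'I_(k + k) | ~~ (x < k)].
have -> : #|[pred f | p f == T]| = #|family F|.
  apply: eq_card => f; rewrite !inE; apply/eqP/familyP => [pT i | fF].
    by rewrite /F -pT /p inE; case fik: (f i < k); rewrite inE fik.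
  apply/finset.setP => i; rewrite inE; have := fF i; rewrite /F.
  by case: (i \in T); rewrite inE; case: (f i < k).
rewrite card_family (@foldr_muln_const _ _ k) ?size_enum_ord // => i.
rewrite /F; case: (i \in T); first exact: card_ord_lt.
have := cardC [pred x : 'I_(k + k) | x < k]; rewrite card_ord card_ord_lt //.
rewrite (@eq_card _ _ [pred x : 'I_(k + k) | ~~ (x < k)]) => [|x]; last by rewrite !inE.
by move/eqP; rewrite eqn_add2l => /eqP.
Qed.

Lemma card_balanced_ffun k :
  #|[pred f : {ffun 'I_(k + k) -> 'I_(k + k)} | #|[set i | f i < k]| == k]|
  = 'C(k + k, k) * k ^ (k + k).
Proof.
pose p (f : {ffun 'I_(k + k) -> 'I_(k + k)}) := [set i | f i < k].
rewrite -sum1_card (partition_big p (fun T => #|T| == k)) /=; last first.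
  by move=> f; rewrite inE.
rewrite (eq_bigr (fun _ => k ^ (k + k))); last first.
  move=> T /eqP cardT; rewrite -(card_ffun_lower_preimage T) -sum1_card.
  apply: eq_bigl => f; rewrite !inE; apply/andP/idP => [[] //|/eqP pT].
  by split; [rewrite pT cardT | exact/eqP].
rewrite (eq_bigl (fun T => T \in [set T : {set 'I_(k + k)} | #|T| == k])).
  by rewrite sum_nat_const card_draws card_ord.
by move=> T; rewrite inE.
Qed.

Lemma central_binomial_rec k :
  k.+1 * 'C(k.+1 + k.+1, k.+1) = 2 * (k + k).+1 * 'C(k + k, k).
Proof.
have diag2 := mul_bin_diag (k + k).+2 k.
have diag1 := mul_bin_diag (k + k).+1 k.
have bin_sym : 'C((k + k).+1, k.+1) = 'C((k + k).+1, k).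
  by rewrite -[in RHS]bin_sub ?leqW ?leq_addr //; congr binomial; lia.
rewrite /= in diag2 diag1.
have -> : k.+1 + k.+1 = (k + k).+2 by rewrite addSn addnS.
apply/eqP; rewrite -(eqn_pmul2l (ltn0Sn k)) -diag2 -bin_sym mulnCA -diag1.
by apply/eqP; set C := 'C(k + k, k); nia.
Qed.

Lemma central_binomial_bound k : (k + k).+1 * 'C(k + k, k) ^ 2 <= 16 ^ k.
Proof.
elim: k => [|k IH]; first by rewrite bin0.
rewrite -(@leq_pmul2l (k.+1 ^ 2)) ?expn_gt0 //.
have -> : k.+1 ^ 2 * ((k.+1 + k.+1).+1 * 'C(k.+1 + k.+1, k.+1) ^ 2)
        = (k.+1 + k.+1).+1 * (k.+1 * 'C(k.+1 + k.+1, k.+1)) ^ 2.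
  by rewrite !expnMn; lia.
rewrite central_binomial_rec [16 ^ k.+1]expnS.
move: IH; set C := 'C(k + k, k); set M := 16 ^ k => IH.
have -> : (k.+1 + k.+1).+1 * (2 * (k + k).+1 * C) ^ 2
          = 4 * (2 * k + 3) * ((k + k).+1 * C ^ 2) * (2 * k + 1) by lia.
apply: (@leq_trans (4 * (2 * k + 3) * M * (2 * k + 1))); last by nia.
exact: leq_mul (leq_mul (leqnn _) IH) (leqnn _).
Qed.

End BalancedResamplings.

Lemma natSinv_lt (R : realType) (e : R) : 0 < e -> exists n : nat, n.+1%:R^-1 < e.
Proof.
move=> e0; have [N _ HN] := near_infty_natSinv_lt (PosNum e0).
by exists N; apply: HN => /=.
Qed.

Section CentralBinomialRatio.
Variable R : realType.
Local Notation rho k := (('C(k + k, k))%:R / (4 ^ k)%:R : R).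

Lemma balanced_ratio k : (0 < k)%N ->
  (('C(k + k, k) * k ^ (k + k))%:R / ((k + k) ^ (k + k))%:R : R) = rho k.
Proof.
move=> k0; have -> : ((k + k) ^ (k + k) = 4 ^ k * k ^ (k + k))%N.
  by rewrite {1}addnn -mul2n expnMn [(2 ^ _)%N]expnD -expnMn.
rewrite !natrM invfM mulrACA mulfV ?mulr1 //.
by rewrite pnatr_eq0 -lt0n expn_gt0 k0.
Qed.

Lemma balanced_ratio_sq k : rho k * rho k * (k + k).+1%:R <= 1.
Proof.
rewrite -ler_pdivlMr ?ltr0n // mul1r mulrACA -invfM -!natrM.
rewrite ler_pdivrMr ?ltr0n ?muln_gt0 ?expn_gt0 //.
rewrite ler_pdivlMl ?ltr0n // -natrM ler_nat -expnMn mulnn.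
exact: central_binomial_bound.
Qed.

Lemma balanced_ratio_small (a : R) (m : nat) : 0 < a ->
  exists k, [/\ (m <= k)%N, (0 < k)%N & rho k < a].
Proof.
move=> a0; have [n na2] := natSinv_lt (mulr_gt0 a0 a0).
exists (maxn (maxn m 1) n); set k := maxn _ _.
have nk : (n <= k)%N by rewrite /k leq_max leqnn orbT.
split; [by rewrite /k !leq_max leqnn | by rewrite /k !leq_max orbT |].
rewrite ltNge; apply/negP => a_le.
have n_le : (n.+1%:R : R) <= (k + k).+1%:R.
  by rewrite ler_nat ltnS (leq_trans nk) // leq_addr.
have : 1 < a * a * n.+1%:R by rewrite -ltr_pdivrMr ?ltr0n // mul1r.
have : a * a * n.+1%:R <= rho k * rho k * (k + k).+1%:R.
  by rewrite ler_pM ?ler0n ?mulr_ge0 ?ler_pM // ltW.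
by have := balanced_ratio_sq k; lra.
Qed.

End CentralBinomialRatio.

Lemma sum_two_valued (R : realType) n (P : pred 'I_n) (a b : R) :
  \sum_(i < n) (if P i then a else b) = #|P|%:R * a + (n - #|P|)%:R * b.
Proof.
rewrite (bigID P) /=; congr (_ + _).
  transitivity (\sum_(i in P) a); first by apply: eq_big => // i ->.
  by rewrite sumr_const mulr_natl.
transitivity (\sum_(i in [predC P]) b).
  by apply: eq_big => [i|i notPi]; [rewrite !inE | rewrite (negbTE notPi)].
rewrite sumr_const mulr_natl; congr (_ *+ _).
have := cardC P; rewrite card_ord => cardPC.
have Pn : (#|P| <= n)%N by rewrite -[X in (_ <= X)%N]card_ord max_card.
by apply/eqP; rewrite -(eqn_add2l #|P|) cardPC subnKC.
Qed.

Section ExactResampling.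
Variables (R : realType) (dX dY : measure_display) (X : measurableType dX)
  (Y : measurableType dY) (Theta : Type) (h : X -> Theta -> Y) (L : Y -> Y -> R).
Local Notation emp := (emp_risk h L).
Local Notation loss z th := (L (h z.1 th) z.2).

Definition half_sample (z1 z2 : X * Y) k : 'I_(k + k) -> X * Y :=
  fun i => if (i < k)%N then z1 else z2.
Arguments half_sample : clear implicits.

Lemma exact_resample_balanced z1 z2 k th (f : {ffun 'I_(k + k) -> 'I_(k + k)}) :
  loss z1 th != loss z2 th -> (0 < k)%N ->
  emp (half_sample z1 z2 k) th = emp (resample (half_sample z1 z2 k) f) th ->
  #|[pred i | (f i < k)%N]| = k.
Proof.
move=> loss_neq k0; set S := half_sample z1 z2 k.
set a := loss z1 th; set b := loss z2 th; set N := #|_|.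
have n0 : ((k + k)%:R : R) != 0 by rewrite pnatr_eq0 -lt0n addn_gt0 k0.
have sumS : \sum_(i < k + k) loss (S i) th = k%:R * a + (k + k - k)%N%:R * b.
  transitivity (\sum_(i < k + k) if (i < k)%N then a else b).
    by apply: eq_bigr => i _; rewrite /S /half_sample; case: (i < k)%N.
  by rewrite sum_two_valued card_ord_lt ?leq_addr.
have sumS' : \sum_(i < k + k) loss (S (f i)) th = N%:R * a + (k + k - N)%N%:R * b.
  rewrite -sum_two_valued.
  by apply: eq_bigr => i _; rewrite /S /half_sample inE; case: (f i < k)%N.
have Nn : (N <= k + k)%N by rewrite -[X in (_ <= X)%N]card_ord max_card.
rewrite /emp_risk /resample sumS sumS' => /(congr1 (fun x => (k + k)%:R * x)).
rewrite !mulrA mulfV // !mul1r !natrB ?leq_addr // => sums_eq.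
have : (k%:R - N%:R) * (a - b) = 0 :> R by move: sums_eq; rewrite natrD; lra.
by move/eqP; rewrite mulf_eq0 !subr_eq0 (negbTE loss_neq) orbF eqr_nat => /eqP.
Qed.

Lemma boot_prob_balanced k : (0 < k)%N ->
  boot_prob R (fun f : {ffun 'I_(k + k) -> 'I_(k + k)} => #|[pred i | (f i < k)%N]| = k)
  = ('C(k + k, k))%:R / (4 ^ k)%:R.
Proof.
move=> k0; rewrite /boot_prob card_ffun card_ord -(balanced_ratio R k0).
rewrite -card_balanced_ffun; congr (_%:R / _%:R); apply: eq_card => f.
rewrite !inE (@eq_card _ _ [pred i | (f i < k)%N]) => [|i]; last by rewrite !inE.
by apply/idP/idP => [/set_mem/asboolP -> //| /eqP fk]; exact/mem_set/asboolP.
Qed.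

Lemma loss_indep_of_exact_resampling m (alpha : R) : alpha < 1 ->
  (forall m' (S : 'I_m' -> X * Y), (m <= m')%N ->
     1 - alpha <= boot_prob R (fun idx => boot_unif_dev h L S (resample S idx) 0)) ->
  forall z1 z2 th, loss z1 th = loss z2 th.
Proof.
move=> alpha1 exact_resampling z1 z2 th; apply/eqP/negPn/negP => loss_neq.
have alpha1' : 0 < 1 - alpha by rewrite subr_gt0.
have [k [mk k0 small]] := @balanced_ratio_small R _ m alpha1'.
have exact_balanced (f : {ffun 'I_(k + k) -> 'I_(k + k)}) :
    boot_unif_dev h L (half_sample z1 z2 k) (resample (half_sample z1 z2 k) f) 0 ->
    #|[pred i | (f i < k)%N]| = k.
  move=> /boot_unif_devP /(_ th); rewrite normr_le0 subr_eq0 => /eqP.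
  exact: exact_resample_balanced.
have := exact_resampling _ (half_sample z1 z2 k) (leq_trans mk (leq_addr k k)).
move=> /le_trans /(_ (@boot_prob_le R _ _ _ exact_balanced)).
by rewrite boot_prob_balanced // leNgt small.
Qed.

End ExactResampling.

Section Plausibility.
Variables (R : realType) (dX dY : measure_display) (X : measurableType dX)
  (Y : measurableType dY) (Theta : Type) (h : X -> Theta -> Y) (L : Y -> Y -> R).

Lemma pl_boot_ge m (S : 'I_m -> X * Y) (e : \bar R) (A : set Theta) (p : R)
    (Q : {ffun 'I_m -> 'I_m} -> Prop) :
  (exists idx, erm_set h L (resample S idx) e !=set0) ->
  (forall idx, Q idx -> erm_set h L (resample S idx) e `&` A !=set0) ->
  p <= boot_prob R Q -> p <= pl_boot h L S e A.
Proof.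
move=> [i0 erm_i0] QA pQ; rewrite /pl_boot.
set num := [set idx | _ ]; set den := [set idx | _ ].
have den_gt0 : (0 < #|den|)%N by apply/card_gt0P; exists i0; rewrite inE; apply/asboolP.
have den_le : (#|den| <= #|{ffun 'I_m -> 'I_m}|)%N by apply: max_card.
have Q_le : (#|[set idx | `[< Q idx >] ]| <= #|num|)%N.
  apply: subset_leq_card; apply/fintype.subsetP => i; rewrite !inE => /asboolP Qi.
  by apply/asboolP; apply: QA.
apply: (le_trans pQ); rewrite /boot_prob.
apply: (@le_trans _ _ (#|num|%:R / #|{ffun 'I_m -> 'I_m}|%:R)).
  by rewrite ler_wpM2r ?invr_ge0 ?ler0n ?ler_nat.
rewrite ler_wpM2l ?ler0n // lef_pV2 ?posrE ?ler_nat ?ltr0n //.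
by apply: (leq_trans den_gt0).
Qed.

End Plausibility.

Section ApproximateMinimisers.
Variables (R : realType) (dX dY : measure_display) (X : measurableType dX)
  (Y : measurableType dY) (Theta : Type) (h : X -> Theta -> Y) (L : Y -> Y -> R)
  (D : probability (X * Y)%type R) (A : set Theta) (delta : R).
Local Notation emp := (emp_risk h L).
Local Notation Rk th := (fine (risk h L D th)).
Hypothesis risk_fin : forall th, risk h L D th \is a fin_num.
Hypothesis risk_set_sub : risk_set h L D delta `<=` A.

Lemma erm_meets_of_argmin m (S S' : 'I_m -> X * Y) c r thS :
  2 * c <= r -> r <= delta ->
  (forall th, `|Rk th - emp S th| <= c) ->
  (forall th, `|emp S th - emp S' th| <= c) ->
  (forall th, emp S thS <= emp S th) ->
  erm_set h L S' r%:E `&` A !=set0.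
Proof.
move=> cr rd devS devS' thS_min; exists thS; split.
  apply/erm_setP => th'; have := devS' thS; have := devS' th'; have := thS_min th'.
  by rewrite !ler_norml => ? /andP[? ?] /andP[? ?]; lra.
apply/risk_set_sub/mem_risk_set => // th'.
have := devS thS; have := devS th'; have := thS_min th'.
by rewrite !ler_norml => ? /andP[? ?] /andP[? ?]; lra.
Qed.

(* Take r/4-approximate minimisers t1
   of R_S and t2 of R_S'; t1 works unless some t3 beats it by more than r on
   S', and then t2 works. *)
Lemma erm_meets_of_lower_bound m (S S' : 'I_m -> X * Y) c r (b : R) (t0 : Theta) :
  0 < r -> 2 * c <= r -> 2 * r <= delta ->
  (forall th, `|Rk th - emp S th| <= c) ->
  (forall th, `|emp S th - emp S' th| <= c) ->
  (forall th, b <= emp S th) ->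
  erm_set h L S' r%:E `&` A !=set0.
Proof.
move=> r0 cr rd devS devS' emp_ge.
have r4 : 0 < r / 4 by rewrite divr_gt0.
have [t1 t1_min] := approx_argmin t0 emp_ge r4.
have emp'_ge th : b - c <= emp S' th.
  by have := devS' th; have := emp_ge th; rewrite ler_norml => ? /andP[? ?]; lra.
have [t2 t2_min] := approx_argmin t0 emp'_ge r4.
have [t1_erm|/existsNP [t3 /negP]] := pselect (forall th', emp S' t1 - r <= emp S' th').
  exists t1; split; first exact/erm_setP.
  apply/risk_set_sub/mem_risk_set => // th'.
  have := devS t1; have := devS th'; have := t1_min th'.
  by rewrite !ler_norml => ? /andP[? ?] /andP[? ?]; lra.
rewrite -ltNge => t3_lt; exists t2; split.
  by apply/erm_setP => th'; have := t2_min th'; lra.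
apply/risk_set_sub/mem_risk_set => // th'.
have := devS t2; have := devS th'; have := t1_min th'; have := t2_min t3.
have := devS' t2; have := devS' t1.
by rewrite !ler_norml => /andP[? ?] /andP[? ?] ? ? /andP[? ?] /andP[? ?]; lra.
Qed.

End ApproximateMinimisers.

Lemma lee_of_lee_addSinv (R : realType) (x : \bar R) (c : R) :
  (forall n : nat, (x <= (c + n.+1%:R^-1)%:E)%E) -> (x <= c%:E)%E.
Proof.
move=> x_le; apply/lee_addgt0Pr => e e0; have [n ne] := natSinv_lt e0.
by apply: (le_trans (x_le n)); rewrite -EFinD lee_fin lerD2l ltW.
Qed.

Section GoodEvents.
Variables (R : realType) (dX dY : measure_display) (X : measurableType dX)
  (Y : measurableType dY) (Theta : Type) (h : X -> Theta -> Y) (L : Y -> Y -> R)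
  (dO : measure_display) (Omega : measurableType dO) (P : probability Omega R)
  (D : probability (X * Y)%type R) (Z : nat -> Omega -> X * Y) (alpha : R).

Definition certified m c := exists x w,
  [/\ 0 < x, x <= c, suc_witness h L P D Z w & w x alpha <= m%:R].

Lemma witness_of_suc_fun_lt x (m : nat) :
  (suc_fun h L P D Z x alpha < m.+1%:R%:E)%E ->
  exists w, suc_witness h L P D Z w /\ w x alpha <= m%:R.
Proof.
move/ereal_inf_lt => [_ [w w_wit <-]]; rewrite lte_fin => ceil_lt.
exists w; split => //; apply: (le_trans (ceil_ge _)).
have natz (n : nat) : (n%:R : R) = (n%:Z)%:~R by [].
by move: ceil_lt; rewrite !natz ltr_int ler_int; move: (Num.ceil _) => k; lia.
Qed.

Lemma eps_a_certified m r c : eps_a h L P D Z m alpha = r%:E -> r / 2 < c ->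
  certified m c.
Proof.
move=> eps_r rc.
have : (eps_a h L P D Z m alpha < (2 * c)%:E)%E by rewrite eps_r lte_fin; lra.
move=> /ereal_inf_lt [_ [e [e0 suc_le] <-]]; rewrite lte_fin => e_lt.
have [|w [w_wit w_le]] := @witness_of_suc_fun_lt (e / 2) m.
  by apply: (le_lt_trans suc_le); rewrite lte_fin ltr_nat.
by exists (e / 2), w; split => //; [rewrite divr_gt0 | lra].
Qed.

Lemma eps_b_certified m r c : eps_b h L P D Z m alpha = r%:E -> r / 2 < c ->
  certified m c.
Proof.
move=> eps_r rc.
have : (eps_b h L P D Z m alpha < (2 * c)%:E)%E by rewrite eps_r lte_fin; lra.
move=> /ereal_inf_lt [_ [e [e0 inf_le] <-]]; rewrite lte_fin => e_lt.
have : (m%:R%:E < m.+1%:R%:E :> \bar R)%E by rewrite lte_fin ltr_nat.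
move=> /(le_lt_trans inf_le) /ereal_inf_lt [_ [d /andP[d0 de] <-]] suc_lt.
have [w [w_wit w_le]] := witness_of_suc_fun_lt suc_lt.
by exists ((e - d) / 2), w; split => //; [rewrite divr_gt0 ?subr_gt0 | lra].
Qed.

Hypothesis unif_dev_meas : forall (m : nat) (eps : R), (0 < m)%N -> 0 < eps ->
  measurable [set om | unif_dev h L D (sample Z m om) eps].
Hypothesis alpha_gt0 : 0 < alpha.

Definition dev_event m c := [set om | unif_dev h L D (sample Z m om) c].

(* The event of level c is the decreasing limit of the levels c + 1/(n+1),
   hence measurable for c >= 0. *)
Lemma dev_event_cap m c : dev_event m c = \bigcap_n dev_event m (c + n.+1%:R^-1).
Proof.
apply/seteqP; split=> om /=; last by move=> dev_le; apply: lee_of_lee_addSinv => n; apply: dev_le.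
by move=> dev_le n _; apply: (le_trans dev_le); rewrite lee_fin lerDl.
Qed.

Lemma dev_event_meas m c : (0 < m)%N -> 0 <= c -> measurable (dev_event m c).
Proof.
move=> m0 c0; rewrite dev_event_cap; apply: bigcapT_measurable => n.
by apply: unif_dev_meas => //; rewrite ltr_wpDl.
Qed.

(* Continuity of P from above along the decreasing events of level c + 1/n. *)
Lemma dev_event_right_cont m c : (0 < m)%N -> 0 <= c ->
  (forall c', c < c' -> ((1 - alpha)%:E <= P (dev_event m c'))%E) ->
  ((1 - alpha)%:E <= P (dev_event m c))%E.
Proof.
move=> m0 c0 prob_ge.
have meas n : measurable (dev_event m (c + n.+1%:R^-1)).
  by apply: dev_event_meas => //; rewrite addr_ge0.
have decr : {homo (fun n => dev_event m (c + n.+1%:R^-1)) : n k / (n <= k)%N >-> (k <= n)%O}.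
  move=> n k nk; apply/subsetPset => om /= dev_le; apply: (le_trans dev_le).
  by rewrite lee_fin lerD2l lef_pV2 ?posrE ?ltr0n // ler_nat.
have P_cvg := nonincreasing_cvg_mu (le_lt_trans (probability_le1 P (meas 0%N)) (ltey _))
  meas (bigcapT_measurable meas) decr.
rewrite dev_event_cap -(cvg_lim _ P_cvg) //; apply: lime_ge; first exact: (cvgP _ P_cvg).
by apply: nearW => n; apply: prob_ge; rewrite ltrDl.
Qed.

Lemma good_events m r : (0 < m)%N -> 0 <= r ->
  (forall c, r / 2 < c -> certified m c) ->
  ((1 - alpha)%:E <= P (dev_event m (r / 2)))%E /\
  forall m' (S : 'I_m' -> X * Y), (m <= m')%N ->
    1 - alpha <= boot_prob R (fun idx => boot_unif_dev h L S (resample S idx) (r / 2)).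
Proof.
move=> m0 r0 cert; split.
  apply: dev_event_right_cont => //; first by rewrite divr_ge0.
  move=> c rc; have [x [w [x0 xc w_wit w_le]]] := cert c rc.
  have [sample_good _] := w_wit x alpha x0 alpha_gt0 m m0 w_le.
  apply: (le_trans sample_good); apply: le_measure; rewrite ?inE.
  - by apply: dev_event_meas => //; rewrite ltW.
  - by apply: dev_event_meas => //; rewrite ltW // (lt_le_trans x0 xc).
  - by move=> om /= dev_le; apply: unif_dev_le dev_le xc.
move=> m' S mm'.
apply: (@boot_prob_right_cont _ _ (fun c idx => boot_unif_dev h L S (resample S idx) c))
  => [c1 c2 idx|idx dev_le|c rc].
- by move=> c12 dev_le; apply: boot_unif_dev_le dev_le c12.
- by apply: lee_of_lee_addSinv => n; apply: dev_le; rewrite ltrDl.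
have [x [w [x0 xc w_wit w_le]]] := cert c rc.
have w_le' : w x alpha <= m'%:R by rewrite (le_trans w_le) // ler_nat.
have [_ resample_good] := w_wit x alpha x0 alpha_gt0 m' (leq_trans m0 mm') w_le'.
apply: (le_trans (resample_good S)); apply: boot_prob_le => idx dev_le.
exact: boot_unif_dev_le dev_le xc.
Qed.

End GoodEvents.

Lemma fine_of_bounded (R : realType) (e : \bar R) (thr : R) :
  (0 <= e)%E -> (e <= thr%:E)%E -> [/\ e = (fine e)%:E, 0 <= fine e & fine e <= thr].
Proof.
move=> e0 e_le; have e_fin : e \is a fin_num.
  by rewrite fin_numE; apply/andP; split; apply/eqP => ee; rewrite ee in e0 e_le.
by split; rewrite ?fineK // -lee_fin fineK.
Qed.

Section FixedSampleSize.
Variables (R : realType) (dX dY : measure_display) (X : measurableType dX)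
  (Y : measurableType dY) (Theta : Type) (h : X -> Theta -> Y) (L : Y -> Y -> R)
  (dO : measure_display) (Omega : measurableType dO) (P : probability Omega R)
  (D : probability (X * Y)%type R) (Z : nat -> Omega -> X * Y) (alpha : R)
  (A : set Theta) (delta : R).
Local Notation emp := (emp_risk h L).
Local Notation loss z th := (L (h z.1 th) z.2).
Local Notation eps_a m := (eps_a h L P D Z m alpha).
Local Notation eps_b m := (eps_b h L P D Z m alpha).
Hypothesis unif_dev_meas : forall (m : nat) (eps : R), (0 < m)%N -> 0 < eps ->
  measurable [set om | unif_dev h L D (sample Z m om) eps].
Hypothesis alpha_gt0 : 0 < alpha.
Hypothesis risk_fin : forall th, risk h L D th \is a fin_num.
Hypothesis risk_set_sub : risk_set h L D delta `<=` A.

Lemma eps_a_ge0 m : (0 <= eps_a m)%E.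
Proof. by apply/ereal_infP => _ [e [e0 _] <-]; rewrite lee_fin ltW. Qed.

Lemma eps_b_ge0 m : (0 <= eps_b m)%E.
Proof. by apply/ereal_infP => _ [e [e0 _] <-]; rewrite lee_fin ltW. Qed.

Lemma pl_event_prob_ge (eps : nat -> \bar R) m r :
  (0 < m)%N -> eps m = r%:E -> 0 <= r ->
  (forall c, r / 2 < c -> certified h L P D Z alpha m c) ->
  pl_well_defined h L Z eps A alpha ->
  (forall S S' : 'I_m -> X * Y, unif_dev h L D S (r / 2) ->
     boot_unif_dev h L S S' (r / 2) -> erm_set h L S' r%:E `&` A !=set0) ->
  ((1 - alpha)%:E <= P (pl_event h L Z m (eps m) A alpha))%E.
Proof.
move=> m0 eps_r r0 cert wd good.
have [sample_good resample_good] := good_events unif_dev_meas alpha_gt0 m0 r0 cert.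
have [erm_ne pl_meas] := wd m m0.
apply: (le_trans sample_good); apply: le_measure; rewrite ?inE //.
  by apply: dev_event_meas => //; rewrite divr_ge0.
move=> om dev_om; rewrite /pl_event /= eps_r.
apply: (pl_boot_ge _ _ (resample_good m _ (leqnn m))) => [|idx].
  by have := erm_ne (sample Z m om); rewrite eps_r.
exact: good.
Qed.

Lemma pl_event_prob_ge_a m : (0 < m)%N -> (eps_a m <= delta%:E)%E ->
  (forall (m : nat) (S : 'I_m -> X * Y), exists thS, forall th, emp S thS <= emp S th) ->
  pl_well_defined h L Z (fun m => eps_a m) A alpha ->
  ((1 - alpha)%:E <= P (pl_event h L Z m (eps_a m) A alpha))%E.
Proof.
move=> m0 eps_le erm_ex wd.
have [eps_r r0 r_le] := fine_of_bounded (eps_a_ge0 m) eps_le.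
apply: (@pl_event_prob_ge (fun m => _) _ _ m0 eps_r r0 (fun c => eps_a_certified eps_r) wd).
move=> S S' /(unif_devP risk_fin) devS /boot_unif_devP devS'.
have [thS thS_min] := erm_ex m S.
by apply: (erm_meets_of_argmin risk_fin risk_set_sub _ _ devS devS' thS_min); lra.
Qed.

Lemma pl_event_prob_ge_b_pos m r : (0 < m)%N -> eps_b m = r%:E -> 0 < r ->
  2 * r <= delta -> pl_well_defined h L Z (fun m => eps_b m) A alpha ->
  ((1 - alpha)%:E <= P (pl_event h L Z m (eps_b m) A alpha))%E.
Proof.
move=> m0 eps_r r0 rd wd; have [erm_ne _] := wd m m0.
have erm_ne_r (S : 'I_m -> X * Y) :
    exists idx, erm_set h L (resample S idx) r%:E !=set0.
  by rewrite -eps_r; apply: erm_ne.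
have [lb lbP] := choice (loss_bounded_below m0 erm_ne_r).
apply: (@pl_event_prob_ge (fun m => _) _ _ m0 eps_r (ltW r0) (fun c => eps_b_certified eps_r) wd).
move=> S S' /(unif_devP risk_fin) devS /boot_unif_devP devS'.
have [_ [t0 _]] := erm_ne S.
apply: (erm_meets_of_lower_bound risk_fin risk_set_sub
  (b := m%:R^-1 * \sum_(i < m) lb (S i)) t0 r0 _ rd devS devS'); first lra.
by move=> th; rewrite /emp_risk ler_wpM2l ?invr_ge0 ?ler0n // ler_sum.
Qed.

(* Case (b) with eps(m, alpha) = 0: the loss is independent of the data point,
   so every empirical risk equals the risk and any exact ERM lies in A. *)
Lemma pl_event_prob_ge_b_zero m : (0 < m)%N -> eps_b m = 0%:E -> alpha < 1 ->
  0 <= delta -> pl_well_defined h L Z (fun m => eps_b m) A alpha ->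
  ((1 - alpha)%:E <= P (pl_event h L Z m (eps_b m) A alpha))%E.
Proof.
move=> m0 eps0 alpha1 delta0 wd; have [erm_ne pl_meas] := wd m m0.
have [_ exact_resampling] :=
  good_events unif_dev_meas alpha_gt0 m0 (lexx 0) (fun c => eps_b_certified eps0).
rewrite mul0r in exact_resampling.
have loss_indep := loss_indep_of_exact_resampling alpha1 exact_resampling.
have pl_ge om : 1 - alpha <= pl_boot h L (sample Z m om) (eps_b m) A.
  set S := sample Z m om; set z := S (Ordinal m0).
  have emp_eq (S' : 'I_m -> X * Y) th : emp S' th = loss z th.
    by apply: emp_risk_cst => // i; apply: loss_indep.
  have [idx0 [t /erm_setP t_erm]] : exists idx, erm_set h L (resample S idx) 0%:E !=set0.
    by rewrite -eps0; apply: erm_ne.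
  apply: (@pl_boot_ge _ _ _ _ _ _ h L m S _ A _ (fun _ => True)).
  - exact: erm_ne.
  - move=> idx _; exists t; rewrite eps0; split.
      by apply/erm_setP => th'; have := t_erm th'; rewrite !emp_eq.
    apply/risk_set_sub/mem_risk_set => // th'.
    by rewrite !(risk_cst _ z) //=; have := t_erm th'; rewrite !emp_eq; lra.
  - by rewrite boot_prob_True lerBlDr lerDl ltW.
apply: (@le_trans _ _ (P setT)); first by rewrite probability_setT lee_fin lerBlDr lerDl ltW.
by apply: le_measure; rewrite ?inE //; move=> om _; apply: pl_ge.
Qed.

Lemma pl_event_prob_ge_b m : (0 < m)%N -> (eps_b m <= (delta / 2)%:E)%E ->
  pl_well_defined h L Z (fun m => eps_b m) A alpha ->
  ((1 - alpha)%:E <= P (pl_event h L Z m (eps_b m) A alpha))%E.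
Proof.
move=> m0 eps_le wd.
have [alpha_ge1|alpha_lt1] := lerP 1 alpha.
  by apply: (le_trans _ (measure_ge0 P _)); rewrite lee_fin subr_le0.
have [eps_r r0 r_le] := fine_of_bounded (eps_b_ge0 m) eps_le.
have [r_gt0|r_le0] := ltrP 0 (fine (eps_b m)).
  by apply: (pl_event_prob_ge_b_pos m0 eps_r r_gt0) => //; lra.
apply: pl_event_prob_ge_b_zero => //; last lra.
by rewrite eps_r; congr (_%:E); apply/eqP; rewrite eq_le r_le0 r0.
Qed.

End FixedSampleSize.

Lemma limn_einf_ge_eventually (R : realType) (u : nat -> \bar R) (x : \bar R) (M : nat) :
  (forall n, (M <= n)%N -> (x <= u n)%E) -> (x <= limn_einf u)%E.
Proof.
move=> u_ge; rewrite limn_einf_lim; apply: lime_ge; first exact: is_cvg_einfs.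
exists M => // n /= Mn; apply/ereal_infP => _ [k /= nk <-].
by apply: u_ge; apply: leq_trans Mn nk.
Qed.

Lemma ceil_le_eventually (R : realType) (y : R) :
  exists M : nat, forall m : nat, (M <= m)%N -> ((Num.ceil y)%:~R : R) <= m%:R.
Proof.
exists `|Num.ceil y|%N => m Mm; have natz (n : nat) : (n%:R : R) = (n%:Z)%:~R by [].
by rewrite natz ler_int; move: (Num.ceil y) Mm => k; lia.
Qed.

Section Asymptotics.
Variables (R : realType) (dX dY : measure_display) (X : measurableType dX)
  (Y : measurableType dY) (Theta : Type) (h : X -> Theta -> Y) (L : Y -> Y -> R)
  (dO : measure_display) (Omega : measurableType dO) (P : probability Omega R)
  (D : probability (X * Y)%type R) (Z : nat -> Omega -> X * Y) (alpha : R).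

Lemma pl_conclusion_of_eventually (eps : nat -> \bar R) (thr : R) (A : set Theta) :
  (forall m, (0 < m)%N -> (eps m <= thr%:E)%E ->
     ((1 - alpha)%:E <= P (pl_event h L Z m (eps m) A alpha))%E) ->
  (exists M, forall n, (M <= n)%N -> (eps n <= thr%:E)%E) ->
  pl_conclusion h L P Z eps thr A alpha.
Proof.
move=> pointwise [M eps_le]; split => //.
apply: (@limn_einf_ge_eventually _ _ _ (maxn M 1)) => n; rewrite geq_max => /andP[Mn n0].
by apply: pointwise => //; apply: eps_le.
Qed.

Variables (w : R -> R -> R).
Hypothesis w_wit : suc_witness h L P D Z w.

Lemma suc_fun_le x (m : nat) : ((Num.ceil (w x alpha))%:~R : R) <= m%:R ->
  (suc_fun h L P D Z x alpha <= m%:R%:E)%E.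
Proof.
by move=> ceil_le; apply: ge_ereal_inf; exists ((Num.ceil (w x alpha))%:~R)%:E;
  [exists w | rewrite lee_fin].
Qed.

Lemma eps_a_eventually_le e : 0 < e ->
  exists M, forall n, (M <= n)%N -> (eps_a h L P D Z n alpha <= e%:E)%E.
Proof.
move=> e0; have [M ceil_le] := ceil_le_eventually (w (e / 2) alpha).
exists M => n Mn; apply: ge_ereal_inf; exists e%:E => //; exists e => //.
by split => //; apply: suc_fun_le; apply: ceil_le.
Qed.

Lemma eps_b_eventually_le e : 0 < e ->
  exists M, forall n, (M <= n)%N -> (eps_b h L P D Z n alpha <= e%:E)%E.
Proof.
move=> e0; have [M ceil_le] := ceil_le_eventually (w ((e - e / 2) / 2) alpha).
exists M => n Mn; apply: ge_ereal_inf; exists e%:E => //; exists e => //.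
split => //; apply: ge_ereal_inf; exists (suc_fun h L P D Z ((e - e / 2) / 2) alpha).
  by exists (e / 2) => //; apply/andP; split; lra.
by apply: suc_fun_le; apply: ceil_le.
Qed.

End Asymptotics.

Unset Implicit Arguments.

Theorem theorem4 (R : realType) (dX dY dO : measure_display)
  (X : measurableType dX) (Y : measurableType dY) (Theta : topologicalType)
  (h : X -> Theta -> Y) (L : Y -> Y -> R)
  (Omega : measurableType dO) (P : probability Omega R)
  (D : probability (X * Y)%type R) (Z : nat -> Omega -> X * Y)
  (A : set Theta) (delta alpha : R) :
  iid_seq P D Z ->
  (forall th : Theta, D.-integrable setT (fun z => (L (h z.1 th) z.2)%:E)) ->
  (forall (m : nat) (eps : R), (0 < m)%N -> 0 < eps ->
     measurable [set om | unif_dev h L D (sample Z m om) eps]) ->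
  borel_set A ->
  0 < delta ->
  risk_set h L D delta `<=` A ->
  strong_unif_conv h L P D Z ->
  0 < alpha ->
  (* case (a) *)
  ((exists th0 : Theta, forall th, (risk h L D th0 <= risk h L D th)%E) ->
   (forall (m : nat) (S : 'I_m -> X * Y),
      exists thS : Theta, forall th, emp_risk h L S thS <= emp_risk h L S th) ->
   pl_well_defined h L Z (fun m => eps_a h L P D Z m alpha) A alpha ->
   pl_conclusion h L P Z (fun m => eps_a h L P D Z m alpha) delta A alpha)
  /\
  (* case (b) *)
  (pl_well_defined h L Z (fun m => eps_b h L P D Z m alpha) A alpha ->
   pl_conclusion h L P Z (fun m => eps_b h L P D Z m alpha) (delta / 2) A alpha).
Proof.
move=> _ loss_int unif_dev_meas _ delta0 risk_set_sub [w w_wit] alpha0.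
have risk_fin th : risk h L D th \is a fin_num.
  by apply: integrable_fin_num => //; exact: loss_int.
split=> [_ erm_ex wd | wd]; apply: pl_conclusion_of_eventually.
- move=> m m0 eps_le.
  exact: (pl_event_prob_ge_a unif_dev_meas alpha0 risk_fin risk_set_sub m0 eps_le).
- exact: eps_a_eventually_le w_wit _ delta0.
- move=> m m0 eps_le.
  exact: (pl_event_prob_ge_b unif_dev_meas alpha0 risk_fin risk_set_sub m0 eps_le).
- by apply: eps_b_eventually_le w_wit _ _; rewrite divr_gt0.
Qed.
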